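(* Let $w\geqslant2$, $h\geqslant1$ be integers and $\underline h=2^{\lfloor\log_2h\rfloor}$. Then $\mathrm{OR}(\mathcal{H}_{h,w})\geqslant\mathrm{OR}(\mathcal{H}_{\underline h,w})$, where $\mathcal{H}_{h,w}$ denotes the set of fast Hough transform patterns on the $h\times w$ image.
   Context: Image: for height $h$ and width $w$, the set $I$ of pixels $p_{ij}$, $i=0,\dots,h-1$ (row, from the bottom), $j=0,\dots,w-1$ (column). A pattern is a nonempty subset of $I$; a pattern set $\mathcal{T}=\{T_k\}_{k=1}^m$ is a nonempty set of distinct patterns; computing it means computing all $y_k=\sum_{p\in T_k}p$. A circuit is a directed acyclic graph with one input node of fanin zero per pixel and $m$ output nodes of fanout zero; each node of nonzero fanin (gate) computes the semigroup sum of its in-neighbours. Size = number of edges. $\mathrm{OR}(\mathcal{T})$ is the minimal size of a circuit computing $\mathcal{T}$ over $(\{0,1\},\vee)$. FHT patterns: for a pattern $T$ with exactly one pixel in each of its rows, $\Delta(T)=(j_{top}-j_{bot})\bmod w$ (column indices of topmost and bottommost pixels), $\mathit{tran}_{a,b}(T)=\{p_{i+a,\,(j+b)\bmod w}\mid p_{ij}\in T\}$. For $h=2^d$: $\mathcal{H}_0=\{\{p_{0j}\}\mid j=0,\dots,w-1\}$, $\mathcal{H}_k=\{T\cup\mathit{tran}_{2^{k-1},\,\Delta(T)+s}(T)\mid T\in\mathcal{H}_{k-1},\ s\in\{0,1\}\}$ for $k=1,\dots,d$, and $\mathcal{H}_{h,w}=\mathcal{H}_d$. For arbitrary $h$, with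 $\overline h=2^{\lceil\log_2h\rceil}$, view the $h\times w$ image $I$ as the bottom $h$ rows of the $\overline h\times w$ image and set $\mathcal{H}_{h,w}=\{T\cap I\mid T\in\mathcal{H}_{\overline h,w}\}$. *)

From Stdlib Require Import ClassicalEpsilon.
From mathcomp Require Import all_boot.
Set Implicit Arguments. Unset Strict Implicit. Unset Printing Implicit Defensive.

(* Circuits over the semigroup ({0,1}, \/) with inputs indexed by P.       *)
(* Nodes are  inl p  (the input node of pixel p, fanin zero) and  inr g    *)
(* (gate g : 'I_ngates).  Gates are listed in a topological order: a gate  *)
(* may only read inputs and gates of smaller index (this is no loss of     *)
(* generality for a DAG).  Edges are given by in-neighbour sets (a DAG has *)
Record circuit (P : finType) := Circuit {
  ngates : nat;
  gin_in : 'I_ngates -> {set P};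
  gin_g  : 'I_ngates -> {set 'I_ngates};
  gin_acyclic : forall g g' : 'I_ngates, g' \in gin_g g -> g' < g;
  gin_nonempty : forall g : 'I_ngates, (0 < #|gin_in g| + #|gin_g g|)%N
}.

Definition node (P : finType) (C : circuit P) : Type := (P + 'I_(ngates C))%type.

(* size = number of edges = sum of fanins of gates *)
Definition csize (P : finType) (C : circuit P) : nat :=
  \sum_(g < ngates C) (#|gin_in g| + #|gin_g g|).

Definition fanout0 (P : finType) (C : circuit P) (v : node C) : Prop :=
  match v with
  | inl p => forall g : 'I_(ngates C), p \notin gin_in g
  | inr g' => forall g : 'I_(ngates C), g' \notin gin_g g
  end.

(* ngates C suffices since gate g has depth at most g+1.                   *)
Fixpoint gval_aux (P : finType) (C : circuit P) (x : P -> bool) (k : nat)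
    (g : 'I_(ngates C)) : bool :=
  match k with
  | 0 => false
  | k'.+1 => [exists p in gin_in g, x p] || [exists g' in gin_g g, gval_aux x k' g']
  end.

Definition nodeval (P : finType) (C : circuit P) (x : P -> bool) (v : node C) : bool :=
  match v with
  | inl p => x p
  | inr g => gval_aux x (ngates C) g
  end.

Definition computes (P : finType) (C : circuit P) (Ts : {set {set P}}) : Prop :=
  forall T, T \in Ts ->
    exists v : node C, fanout0 v /\
      forall x : P -> bool, @nodeval P C x v = [exists p in T, x p].

Definition has_circuit_of_size (P : finType) (Ts : {set {set P}}) (n : nat) : Prop :=
  exists C : circuit P, computes C Ts /\ csize C = n.

Definition has_circuit_of_sizeb (P : finType) (Ts : {set {set P}}) (n : nat) : bool :=
  if excluded_middle_informative (has_circuit_of_size Ts n) then true else false.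

(* OR(Ts) = minimal size of a circuit computing Ts (0 if none exists,      *)
(* which never happens for pattern sets).                                  *)
Definition ORsize (P : finType) (Ts : {set {set P}}) : nat :=
  match excluded_middle_informative (exists n, has_circuit_of_sizeb Ts n) with
  | left H => ex_minn H
  | right _ => 0
  end.

(* FHT patterns.  A pattern with exactly one pixel in each of the rows     *)
(* 0..2^k-1 is encoded as the sequence of its column indices, bottom row   *)
(* first (entry i = column of the pixel in row i).                         *)
Definition fht_delta (w : nat) (T : seq nat) : nat :=
  (last 0 T + w - head 0 T) %% w.

Definition fht_join (w b : nat) (T : seq nat) : seq nat :=
  T ++ [seq (j + b) %% w | j <- T].

Fixpoint fht_seq (w d : nat) : seq (seq nat) :=
  match d with
  | 0 => [seq [:: j] | j <- iota 0 w]
  | d'.+1 => [seq fht_join w (fht_delta w T + s) T | T <- fht_seq w d', s <- [:: 0; 1]]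
  end.

(* H_{h,w}: patterns of H_{hbar,w}, hbar = 2^ceil(log2 h), intersected    *)
(* with the bottom h rows, as sets of pixels p = (row, column).            *)
Definition FHT (h w : nat) : {set {set 'I_h * 'I_w}} :=
  [set S : {set 'I_h * 'I_w} |
     has (fun T => S == [set p : 'I_h * 'I_w | nth 0 T p.1 == p.2])
         (fht_seq w (up_log 2 h))].

From Stdlib Require Import ClassicalEpsilon.
From mathcomp Require Import all_boot.
Set Implicit Arguments. Unset Strict Implicit. Unset Printing Implicit Defensive.

(* Setting to 0 the pixels of the rows m <= i < h turns an OR-circuit for the
   FHT patterns of the h x w image into one for the m x w image, without
   increasing its size: the pixels outside the small image disappear, gates
   that become constantly 0 are disconnected, and all other gates only lose
   in-edges.  Since the FHT recursion only appends rows on top, every pattern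
   of the small image is the trace of a pattern of the large one on its bottom
   m rows, so the new circuit computes the FHT patterns of the small image. *)

Section Evaluation.
Variables (P : finType) (C : circuit P).
Implicit Types (x y : P -> bool) (g : 'I_(ngates C)).

Lemma gval_aux_fuel x k m g : k <= m -> gval_aux x k g -> gval_aux x m g.
Proof.
elim: k m g => [|k IH] [|m] g //= km /orP[-> //|/existsP[g' /andP[g'g v]]].
by apply/orP; right; apply/existsP; exists g'; rewrite g'g (IH m).
Qed.

Lemma gval_aux_homo x y k g :
  (forall p, x p -> y p) -> gval_aux x k g -> gval_aux y k g.
Proof.
move=> xy; elim: k g => [|k IH] g //=.
case/orP=> [/existsP[p /andP[pg /xy yp]]|/existsP[g' /andP[g'g v]]].
  by apply/orP; left; apply/existsP; exists p; rewrite pg.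
by apply/orP; right; apply/existsP; exists g'; rewrite g'g IH.
Qed.

Lemma gval_aux_step x k g :
  gval_aux x k g ->
  [exists p in gin_in g, x p] || [exists g' in gin_g g, gval_aux x k.-1 g'].
Proof. by case: k. Qed.

Lemma gval_aux_unread x k g :
  (forall p g', x p -> p \notin gin_in g') -> gval_aux x k g = false.
Proof.
move=> unread; elim: k g => [|k IH] g //=; apply/norP; split.
  by apply/existsP=> -[p /andP[pg /(unread _ g)]]; rewrite pg.
by apply/existsP=> -[g' /andP[_]]; rewrite IH.
Qed.

End Evaluation.

Definition is_output (P : finType) (C : circuit P) (T : {set P}) (v : node C) :=
  fanout0 v /\ forall x : P -> bool, nodeval x v = [exists p in T, x p].

Definition empty_circuit (Q : finType) : circuit Q :=
  @Circuit Q 0 (fun _ => set0) (fun _ => set0) ltac:(by case) ltac:(by case).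

Section Restriction.
Variables (P Q : finType) (e : Q -> P).
Hypothesis e_inj : injective e.

Definition zero_ext (x : Q -> bool) (p : P) : bool := [exists q, (e q == p) && x q].

Lemma zero_ext_exists x (S : {set P}) :
  [exists p in S, zero_ext x p] = [exists q in e @^-1: S, x q].
Proof.
apply/existsP/existsP => [[p /andP[pS /existsP[q /andP[/eqP qp xq]]]]|[q]].
  by exists q; rewrite inE qp pS.
rewrite inE => /andP[qS xq]; exists (e q); rewrite qS /=.
by apply/existsP; exists q; rewrite eqxx.
Qed.

Lemma zero_extE x q : zero_ext x (e q) = x q.
Proof.
apply/existsP/idP => [[q' /andP[/eqP/e_inj -> //]]|xq].
by exists q; rewrite eqxx.
Qed.

Lemma zero_ext_codom x p : zero_ext x p -> p \in codom e.
Proof. by case/existsP=> q /andP[/eqP <- _]; apply: codom_f. Qed.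

Lemma input_output_preim p (S : {set P}) q :
  (forall x : P -> bool, x p = [exists p' in S, x p']) -> q \in e @^-1: S ->
  e q = p /\ forall x : Q -> bool, x q = [exists q' in e @^-1: S, x q'].
Proof.
move=> pS; rewrite inE => qS; have eqp : e q = p.
  apply/eqP; rewrite eq_sym -[p == e q]/((pred1 (e q)) p) pS.
  by apply/existsP; exists (e q); rewrite qS /=.
by split=> // x; rewrite -zero_extE -zero_ext_exists -pS eqp.
Qed.

Lemma card_preimset_inj (S : {set P}) : #|e @^-1: S| <= #|S|.
Proof.
rewrite -(card_imset _ e_inj); apply: subset_leq_card.
by apply/subsetP=> _ /imsetP[q + ->]; rewrite inE.
Qed.

Section RestrictedCircuit.
Variable C : circuit P.
Implicit Types (g : 'I_(ngates C)).

(* By monotonicity, g can be 1 under some zero extension iff it is 1 when all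
   pixels of the image of e are 1. *)
Definition live g := gval_aux (fun p => p \in codom e) (ngates C) g.

Lemma live_of_gval (x : P -> bool) k g :
  (forall p, x p -> p \in codom e) -> k <= ngates C -> gval_aux x k g -> live g.
Proof. by move=> xe kC /(gval_aux_fuel kC); apply: gval_aux_homo. Qed.

(* Dead gates keep the dummy fanin {q0}; restrict_computes picks q0 among the
   pixels read by C, so q0 is never an output. *)
Variable q0 : Q.

Definition restr_in g : {set Q} := if live g then e @^-1: gin_in g else [set q0].

Definition restr_g g : {set 'I_(ngates C)} :=
  if live g then [set g' in gin_g g | live g'] else set0.

Lemma restr_acyclic g g' : g' \in restr_g g -> g' < g.
Proof. by rewrite /restr_g; case: live; rewrite inE // => /andP[/gin_acyclic]. Qed.

Lemma restr_nonempty g : 0 < #|restr_in g| + #|restr_g g|.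
Proof.
rewrite /restr_in /restr_g; case: ifP => [lg|_]; last by rewrite cards1.
rewrite lt0n addn_eq0 !cards_eq0 negb_and.
case/gval_aux_step/orP: lg => [/existsP[p /andP[pg /codomP[q epq]]]|].
  by apply/orP; left; apply/set0Pn; exists q; rewrite inE -epq.
case/existsP=> g' /andP[g'g lg']; apply/orP; right; apply/set0Pn.
by exists g'; rewrite inE g'g (live_of_gval _ (leq_pred _) lg').
Qed.

Definition restr_circuit : circuit Q := Circuit restr_acyclic restr_nonempty.

Lemma restr_gval (x : Q -> bool) k g : k <= ngates C -> live g ->
  gval_aux (C := restr_circuit) x k g = gval_aux (zero_ext x) k g.
Proof.
elim: k g => [|k IH] g // kC lg /=.
rewrite /restr_in /restr_g lg zero_ext_exists; congr orb.
apply/existsP/existsP => -[g' /andP[g'g v]].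
  move: g'g; rewrite inE => /andP[g'g lg'].
  by exists g'; rewrite g'g -IH // ltnW.
have lg' : live g' by apply: live_of_gval (ltnW kC) v; apply: zero_ext_codom.
by exists g'; rewrite inE g'g lg' IH // ltnW.
Qed.

Lemma restr_csize : csize restr_circuit <= csize C.
Proof.
apply: leq_sum => g _ /=; rewrite /restr_in /restr_g; case: ifP => _.
  apply: leq_add; first exact: card_preimset_inj.
  by apply: subset_leq_card; apply/subsetP => g'; rewrite inE => /andP[].
by rewrite cards1 cards0; apply: gin_nonempty.
Qed.

Hypothesis q0_read : exists g, e q0 \in gin_in g.

Lemma restr_output (S : {set P}) (v : node C) :
  is_output S v -> e @^-1: S != set0 ->
  exists v', is_output (C := restr_circuit) (e @^-1: S) v'.
Proof.
case: v => [p|g] [out comp] /set0Pn[q qS].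
  have [eqp compq] := input_output_preim comp qS.
  exists (inl q); split=> // g /=; rewrite /restr_in; case: ifP => _.
    by rewrite inE eqp out.
  have [g0 read0] := q0_read; rewrite inE.
  by apply: contraNneq (out g0) => qq0; rewrite -eqp qq0.
have lg : live g.
  apply: (live_of_gval (@zero_ext_codom (pred1 q)) (leqnn _)).
  have /= -> := comp (zero_ext (pred1 q)); rewrite zero_ext_exists.
  by apply/existsP; exists q; rewrite qS /=.
exists (inr g); split=> [g2|x] /=.
  by rewrite /restr_g; case: ifP => _; rewrite inE // negb_and out.
by rewrite restr_gval // -zero_ext_exists -comp.
Qed.

End RestrictedCircuit.

Lemma restrict_computes (Ts : {set {set P}}) (Ts' : {set {set Q}}) (C : circuit P) :
  (forall T, T \in Ts' -> T != set0) ->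
  (forall T, T \in Ts' -> exists2 S, S \in Ts & T = e @^-1: S) ->
  computes C Ts -> exists2 C' : circuit Q, computes C' Ts' & csize C' <= csize C.
Proof.
move=> nz preim compC.
have [[q0 g0] /= read0 | unread] :=
  pickP (fun qg : Q * 'I_(ngates C) => e qg.1 \in gin_in qg.2).
  exists (restr_circuit C q0); last exact: restr_csize.
  move=> T T'T; have := nz T T'T; have [S TsS ->] := preim T T'T => nzS.
  have [v outv] := compC S TsS.
  by apply: restr_output outv nzS; exists g0.
(* Otherwise every gate of C is constantly 0 under zero extensions, so all the
   outputs needed for Ts' are input nodes. *)
exists (empty_circuit Q); last by rewrite /csize big_ord0.
move=> T T'T; have := nz T T'T; have [S TsS ->] := preim T T'T => /set0Pn[q qS].
have [[p|g] [out comp]] := compC S TsS.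
  have [_ compq] := input_output_preim comp qS.
  by exists (inl q); split=> // -[].
have := comp (zero_ext (pred1 q)); rewrite /= gval_aux_unread.
  by rewrite zero_ext_exists => /esym/existsP[]; exists q; rewrite qS /=.
by move=> _ g' /zero_ext_codom/codomP[q' ->]; move/negbT: (unread (q', g')).
Qed.

End Restriction.

Section MinimalSize.
Variable P : finType.
Implicit Types (Ts : {set {set P}}) (C : circuit P).

Lemma has_circuit_of_sizebP Ts n :
  reflect (has_circuit_of_size Ts n) (has_circuit_of_sizeb Ts n).
Proof.
by rewrite /has_circuit_of_sizeb; case: excluded_middle_informative; constructor.
Qed.

Lemma ORsize_min Ts C : computes C Ts -> ORsize Ts <= csize C.
Proof.
move=> compC; rewrite /ORsize; case: excluded_middle_informative => [ex|[]].
  by case: ex_minnP => n _; apply; apply/has_circuit_of_sizebP; exists C.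
by exists (csize C); apply/has_circuit_of_sizebP; exists C.
Qed.

Lemma ORsize_attained Ts C : computes C Ts ->
  exists2 C', computes C' Ts & csize C' = ORsize Ts.
Proof.
move=> compC; rewrite /ORsize; case: excluded_middle_informative => [ex|[]].
  by case: ex_minnP => n /has_circuit_of_sizebP[C' [compC' <-]] _; exists C'.
by exists (csize C); apply/has_circuit_of_sizebP; exists C.
Qed.

Lemma circuit_exists Ts :
  (forall T, T \in Ts -> T != set0) -> exists C, computes C Ts.
Proof.
move=> nz.
have acyclic (g g' : 'I_#|Ts|) : g' \in (set0 : {set 'I_#|Ts|}) -> g' < g.
  by rewrite inE.
have fanin (g : 'I_#|Ts|) : 0 < #|enum_val g| + #|(set0 : {set 'I_#|Ts|})|.
  by rewrite cards0 addn0 lt0n cards_eq0 nz // enum_valP.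
pose C := Circuit acyclic fanin.
have gvalE x k (g : 'I_#|Ts|) :
    0 < k -> gval_aux (C := C) x k g = [exists p in enum_val g, x p].
  case: k => //= k _; rewrite orbC; case: existsP => // -[g' /andP[]].
  by rewrite inE.
exists C => T TsT; exists (inr (enum_rank_in TsT T)); split=> [g|x] /=.
  by rewrite inE.
by rewrite gvalE ?enum_rankK_in //; apply/card_gt0P; exists T.
Qed.

End MinimalSize.

Lemma ORsize_restrict (P Q : finType) (e : Q -> P)
    (Ts : {set {set P}}) (Ts' : {set {set Q}}) :
  injective e ->
  (forall T, T \in Ts -> T != set0) ->
  (forall T, T \in Ts' -> T != set0) ->
  (forall T, T \in Ts' -> exists2 S, S \in Ts & T = e @^-1: S) ->
  ORsize Ts' <= ORsize Ts.
Proof.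
move=> e_inj nz nz' preim.
have [C0 compC0] := circuit_exists nz.
have [C compC <-] := ORsize_attained compC0.
have [C' compC' le] := restrict_computes e_inj nz' preim compC.
exact: leq_trans (ORsize_min compC') le.
Qed.

Section FHTPatterns.
Variable w : nat.

Lemma size_fht_seq d T : T \in fht_seq w d -> size T = 2 ^ d.
Proof.
elim: d T => [|d IH] T; first by case/mapP=> j _ ->.
case/allpairsPdep=> T0 [s [T0d _ ->]].
by rewrite size_cat size_map (IH _ T0d) expnS mul2n addnn.
Qed.

Lemma fht_seq_ltn d T : 0 < w -> T \in fht_seq w d -> all (fun j => j < w) T.
Proof.
move=> w0; elim: d T => [|d IH] T.
  by case/mapP=> j; rewrite mem_iota => /andP[_ jw] ->; rewrite /= jw.
case/allpairsPdep=> T0 [s [T0d _ ->]].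
by rewrite all_cat IH //=; apply/allP => _ /mapP[j _ ->]; rewrite ltn_mod.
Qed.

Lemma fht_seq_prefix k m T :
  k <= m -> T \in fht_seq w k -> exists s, T ++ s \in fht_seq w m.
Proof.
move=> /subnK <- Tk; elim: (m - k) => [|n [s Ts]].
  by exists [::]; rewrite cats0.
exists (s ++ [seq (j + (fht_delta w (T ++ s) + 0)) %% w | j <- T ++ s]).
rewrite addSn catA.
by apply: (allpairs_f_dep (fun T s => fht_join w (fht_delta w T + s) T)).
Qed.

Lemma FHT_neq0 h S : 0 < w -> 0 < h -> S \in FHT h w -> S != set0.
Proof.
move=> w0 h0; rewrite inE => /hasP[T Td /eqP ->].
have T0w : nth 0 T 0 < w.
  apply: (allP (fht_seq_ltn w0 Td)).
  by rewrite mem_nth // (size_fht_seq Td) expn_gt0.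
by apply/set0Pn; exists (Ordinal h0, Ordinal T0w); rewrite inE.
Qed.

Definition widen_rows m h (mh : m <= h) (q : 'I_m * 'I_w) : 'I_h * 'I_w :=
  (widen_ord mh q.1, q.2).

Lemma widen_rows_inj m h (mh : m <= h) : injective (widen_rows mh).
Proof. by move=> [i j] [i' j'] [/val_inj -> ->]. Qed.

Lemma FHT_preim_widen m h (mh : m <= h) S :
  S \in FHT m w -> exists2 S', S' \in FHT h w & S = widen_rows mh @^-1: S'.
Proof.
rewrite inE => /hasP[T Tm /eqP ->].
have [s Ts] := fht_seq_prefix (leq_up_log 2 mh) Tm.
exists [set p : 'I_h * 'I_w | nth 0 (T ++ s) p.1 == p.2].
  by rewrite inE; apply/hasP; exists (T ++ s).
apply/setP => q; rewrite !inE /= nth_cat (size_fht_seq Tm).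
by rewrite (leq_trans (ltn_ord _) (up_logP _ _)).
Qed.

Theorem ORsize_FHT_widen m h :
  0 < w -> 0 < m -> m <= h -> ORsize (FHT m w) <= ORsize (FHT h w).
Proof.
move=> w0 m0 mh; apply: (ORsize_restrict (@widen_rows_inj m h mh)).
- by move=> S; apply: FHT_neq0 (leq_trans m0 mh).
- by move=> S; apply: FHT_neq0.
- exact: FHT_preim_widen.
Qed.

End FHTPatterns.

Theorem proposition9 (h w : nat) :
  (2 <= w)%N -> (1 <= h)%N ->
  (ORsize (FHT (2 ^ trunc_log 2 h) w) <= ORsize (FHT h w))%N.
Proof.
move=> w2 h1; apply: ORsize_FHT_widen; first exact: ltnW.
  by rewrite expn_gt0.
exact: trunc_logP.
Qed.
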